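(* Let $p$ be a prime, $a\in\mathbb{N}\setminus p\mathbb{Z}$ and $n\in\mathbb{N}$. If the element $\pi_n(a)=a+p^n\mathbb{Z}$ has order at least $\max\{p,3\}$ in the multiplicative group $\mathbb{Z}_{p^n}^\times$, then $\overline{a^{\mathbb{N}}}=\pi_n^{-1}(\pi_n(a)^{\mathbb{N}})$, where the closure is taken in the $p$-adic topology on $\mathbb{N}\setminus p\mathbb{N}$.
   Context: $\mathbb{N}=\{1,2,\dots\}$, $\mathbb{N}_0=\{0\}\cup\mathbb{N}$. For $x\in\mathbb{N}$, $x^{\mathbb{N}}=\{x^k:k\in\mathbb{N}\}$, and for an element $g$ of a group, $g^{\mathbb{N}}=\{g^k:k\in\mathbb{N}\}$. $\mathbb{Z}_{p^n}=\mathbb{Z}/p^n\mathbb{Z}$, $\mathbb{Z}_{p^n}^\times$ its group of units, and $\pi_n:\mathbb{N}\to\mathbb{Z}_{p^n}$, $x\mapsto x+p^n\mathbb{Z}$. The $p$-adic topology on $\mathbb{N}\setminus p\mathbb{N}$ is generated by the sets $x+p^m\mathbb{N}_0$ with $x,m\in\mathbb{N}$. *)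

From mathcomp Require Import all_boot all_order all_algebra all_fingroup.
Set Implicit Arguments. Unset Strict Implicit. Unset Printing Implicit Defensive.
Import GRing.Theory.

(* pi_n : N -> Z_{p^n},  x |-> x + p^n Z   (used with m = p^n >= 2) *)
Definition pi_mod (m x : nat) : 'Z_m := (x%:R)%R.

(* Order of pi_m(a) in the multiplicative group Z_m^x  (0 if not a unit). *)
Definition unit_order (m a : nat) : nat :=
  if insub (pi_mod m a) is Some u then #[u : {unit 'Z_m}]%g else 0.

Definition padic_ball (p x m : nat) (y : nat) : Prop :=
  x <= y /\ y = x %[mod p ^ m].

(* Closure of S in the p-adic topology on N \ pN (topology generated by the
   basic sets x + p^m N_0, x, m in N, which form a base): y is in the closure
   iff y is in N \ pN and every basic set containing y meets S. *)
Definition padic_closure (p : nat) (S : nat -> Prop) (y : nat) : Prop :=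
  0 < y /\ ~~ (p %| y) /\
  forall x m, 0 < x -> 0 < m -> padic_ball p x m y ->
    exists s, S s /\ padic_ball p x m s.

(* Let e = totient (p ^ (p == 2).+1), i.e. e = p - 1, or e = 2 when p = 2; then
   b = a ^ e satisfies v_p(b - 1) = j with j >= 1 (j >= 2 when p = 2), and j < n
   because a has order > e modulo p ^ n.  Lifting the exponent gives
   v_p(b ^ (p ^ m) - 1) = j + m, so, digit by digit, the powers of b reach every
   residue class of 1 + p ^ j Z modulo p ^ (j + m), with arbitrarily large
   exponents.  Hence every y = a ^ k (mod p ^ n) is a p-adic limit of powers of a;
   conversely a limit of powers of a is congruent to one of them mod p ^ n. *)

From mathcomp Require Import all_boot all_order all_algebra all_fingroup.
From mathcomp Require Import cyclic ring zify.
Import GRing.Theory.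

Set Implicit Arguments.
Unset Strict Implicit.
Unset Printing Implicit Defensive.

Lemma PoszX (n k : nat) : ((n ^ k)%N%:Z = n%:Z ^+ k)%R.
Proof. by rewrite -natz natrX natz. Qed.

Lemma eqn_modz (d x y : nat) : (x == y %[mod d]) = (d%:Z %| x%:Z - y%:Z)%Z%R.
Proof. by rewrite -eqz_mod_dvd !modz_nat eqz_nat. Qed.

Lemma modn_dvd_congr (d m x y : nat) : d %| m -> x = y %[mod m] -> x = y %[mod d].
Proof. by move=> d_m xy; rewrite -(modn_dvdm x d_m) xy modn_dvdm. Qed.

Section OneModPrimePower.
Local Open Scope ring_scope.

Lemma exp1D_trunc2 {R : comPzRingType} (x : R) (r : nat) :
  exists z : R, (1 + x) ^+ r = 1 + x * r%:R + x ^+ 2 * z.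
Proof.
elim: r => [|r [z IH]]; first by exists 0; ring.
by exists (r%:R + z + z * x); rewrite exprS IH; ring.
Qed.

Lemma exp1D_trunc3 {R : comPzRingType} (x : R) (r : nat) :
  exists z : R, (1 + x) ^+ r = 1 + x * r%:R + x ^+ 2 * 'C(r, 2)%:R + x ^+ 3 * z.
Proof.
elim: r => [|r [z IH]]; first by exists 0; rewrite bin0n mulr0n; ring.
by exists ('C(r, 2)%:R + z + z * x); rewrite exprS IH binS bin1 natrD; ring.
Qed.

Variable p : nat.
Hypothesis p_pr : prime p.
Local Notation P := p%:Z.

Lemma Euclid_dvdzM (x y : int) : (P %| x * y)%Z = (P %| x)%Z || (P %| y)%Z.
Proof. by rewrite !dvdzE abszM Euclid_dvdM. Qed.

Lemma Euclid_dvdzX (x : int) n : (P %| x ^+ n)%Z = (P %| x)%Z && (0 < n)%N.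
Proof. by rewrite !dvdzE abszX Euclid_dvdX. Qed.

Definition exact_1mod (i : nat) (c : int) : Prop :=
  exists2 t : int, c = 1 + P ^+ i * t & ~~ (P %| t)%Z.

Lemma exact_1mod_dvdz_exp i c r : exact_1mod i c -> (P ^+ i %| c ^+ r - 1)%Z.
Proof.
case=> t -> _; have [z ->] := exp1D_trunc2 (P ^+ i * t) r.
by apply/dvdzP; exists (t * r%:R + P ^+ i * t ^+ 2 * z); ring.
Qed.

Lemma exact_1mod_logn (b : nat) : (1 < b)%N -> exact_1mod (logn p (b - 1)) b.
Proof.
move=> b_gt1; have b1_gt0 : (0 < b - 1)%N by rewrite subn_gt0.
have [t p_t Eb] := pfactor_coprime p_pr b1_gt0.
exists t; last by rewrite dvdzE absz_nat -prime_coprime.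
set j := logn p _ in Eb *.
by rewrite -(subnK (ltnW b_gt1)) Eb PoszD PoszM PoszX addrC mulrC.
Qed.

Lemma exact_1mod_pNdvd i c : (0 < i)%N -> exact_1mod i c -> ~~ (P %| c)%Z.
Proof.
case: i => // i _ [t -> _]; rewrite rpredDr ?dvdz1 ?exprS ?dvdz_mulr ?dvdzz //.
by rewrite absz_nat; case: eqP p_pr => // ->.
Qed.

Lemma exact_1mod_expp i c : (0 < i)%N -> (2 < p)%N || (1 < i)%N ->
  exact_1mod i c -> exact_1mod i.+1 (c ^+ p).
Proof.
case: i => // i _ p_i [t -> pNt].
have [z ->] := exp1D_trunc3 (P ^+ i.+1 * t) p.
have [q q_def] : exists q, (P ^+ i.+1 * t) ^+ 2 * 'C(p, 2)%:R = P ^+ i.+3 * q.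
  case/orP: p_i => [p_gt2 | i_gt0].
  - have /dvdnP [d ->] : (p %| 'C(p, 2))%N by rewrite prime_dvd_bin // p_gt2.
    by exists (d%:R * P ^+ i * t ^+ 2); rewrite natrM natz !exprS; ring.
  - case: i i_gt0 => // i _.
    by exists ('C(p, 2)%:R * P ^+ i * t ^+ 2); rewrite !exprS; ring.
exists (t + P * (q + P ^+ i * P ^+ i * t ^+ 3 * z)).
  by rewrite q_def natz !exprS; ring.
by rewrite rpredDr // dvdz_mulr ?dvdzz.
Qed.

Lemma exact_1mod_exppn i c r : (0 < i)%N -> (2 < p)%N || (1 < i)%N ->
  exact_1mod i c -> exact_1mod (i + r) (c ^+ (p ^ r)).
Proof.
move=> i_gt0 p_i c_i; elim: r => [|r IHr]; first by rewrite addn0 expr1.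
rewrite expnSr exprM addnS; apply: exact_1mod_expp IHr; first by rewrite ltn_addr.
by case/orP: p_i => [-> // | i_gt1]; rewrite ltn_addr ?orbT.
Qed.

Lemma dvdz_solve_linear (s c : int) : ~~ (P %| c)%Z ->
  exists r : nat, (P %| s + c * r%:R)%Z.
Proof.
move=> pNc; have /coprimezP [[u v] /= Buv] : coprimez P c.
  by rewrite coprimezE absz_nat prime_coprime.
have P_neq0 : P != 0 by rewrite eqz_nat -lt0n prime_gt0.
pose r0 := - (s * v); exists `|(r0 %% P)%Z|%N.
rewrite natz gez0_abs ?modz_ge0 //; apply/dvdzP.
exists (s * u - c * (r0 %/ P)%Z).
have := divz_eq r0 P; rewrite /r0; move: (_ %/ _)%Z (_ %% _)%Z => q m Er0.
have -> : m = - (s * v) - q * P by rewrite Er0; ring.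
by rewrite -[s in s + _]mulr1 -Buv; ring.
Qed.

(* With [c = 1 + t * p ^ k], [c ^+ r = 1 + r * t * p ^ k] modulo [p ^ k.+1] and
   [u * t] is a unit mod [p], so [r] can be chosen to fix the next digit. *)
Lemma exact_1mod_next_digit k c (u w : int) : (0 < k)%N -> exact_1mod k c ->
  ~~ (P %| u)%Z -> (P ^+ k %| u - w)%Z ->
  exists r : nat, (P ^+ k.+1 %| u * c ^+ r - w)%Z.
Proof.
case: k => // k _ [t -> pNt] pNu /dvdzP [s Es].
have [r /dvdzP [g Eg]] : exists r : nat, (P %| s + u * t * r%:R)%Z.
  by apply: dvdz_solve_linear; rewrite !Euclid_dvdzM negb_or pNu.
exists r; have [z ->] := exp1D_trunc2 (P ^+ k.+1 * t) r.
have -> : w = u - s * P ^+ k.+1 by rewrite -Es; ring.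
apply/dvdzP; exists (g + P ^+ k * u * t ^+ 2 * z).
transitivity (P ^+ k.+1 * (s + u * t * r%:R)
              + P ^+ k.+1 * P ^+ k.+1 * u * t ^+ 2 * z); first by ring.
by rewrite Eg !exprS; ring.
Qed.

Lemma exact_1mod_powers_cover j b m N (v w : int) :
  (0 < j)%N -> (2 < p)%N || (1 < j)%N -> exact_1mod j b ->
  ~~ (P %| v)%Z -> (P ^+ j %| v - w)%Z ->
  exists2 i, (N <= i)%N & (P ^+ (j + m) %| v * b ^+ i - w)%Z.
Proof.
move=> j_gt0 p_j b_j pNv v_w; elim: m => [|m [i N_i IHm]].
  exists N => //; rewrite addn0.
  have -> : v * b ^+ N - w = v * (b ^+ N - 1) + (v - w) by ring.
  by rewrite rpredD ?dvdz_mull ?exact_1mod_dvdz_exp.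
have pNvb : ~~ (P %| v * b ^+ i)%Z.
  have pNb := exact_1mod_pNdvd j_gt0 b_j.
  by rewrite Euclid_dvdzM Euclid_dvdzX (negbTE pNv) (negbTE pNb).
have [|r pvbr] := exact_1mod_next_digit _ (exact_1mod_exppn m j_gt0 p_j b_j) pNvb IHm.
  by rewrite addn_gt0 j_gt0.
exists (i + p ^ m * r)%N; first exact: leq_trans N_i (leq_addr _ _).
by rewrite exprD exprM mulrA addnS.
Qed.

End OneModPrimePower.

Lemma pi_mod_eqE m x y : 1 < m -> (pi_mod m x == pi_mod m y) = (x == y %[mod m]).
Proof. by move=> m_gt1; rewrite -val_eqE /= !val_Zp_nat. Qed.

Lemma pi_modX m x k : pi_mod m (x ^ k) = (pi_mod m x ^+ k)%R.
Proof. exact: natrX. Qed.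

Lemma unit_order_le m a e : 1 < m -> 0 < e -> a ^ e = 1 %[mod m] ->
  unit_order m a <= e.
Proof.
move=> m_gt1 e_gt0 a_e; rewrite /unit_order; case: insubP => [u _ u_a|] //=.
apply: dvdn_leq => //; rewrite order_dvdn; apply/eqP/val_inj.
rewrite FinRing.val_unitX FinRing.val_unit1 u_a -pi_modX.
by apply/eqP; rewrite -[X in _ == X]/(pi_mod m 1) pi_mod_eqE // a_e.
Qed.

Lemma totient_pfactor_lt_maxn3 p : prime p -> 0 < totient (p ^ (p == 2).+1) < maxn p 3.
Proof.
move=> p_pr; rewrite totient_pfactor //; case: eqP => [-> // | /eqP p_neq2].
have p_gt2 : 2 < p by rewrite ltn_neqAle eq_sym p_neq2 prime_gt1.
by rewrite /= muln1; lia.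
Qed.

Lemma exists_exact_1mod_power p a n : prime p -> ~~ (p %| a) -> 0 < n ->
  maxn p 3 <= unit_order (p ^ n) a ->
  exists e j, [/\ 0 < e, 0 < j < n, (2 < p) || (1 < j) & exact_1mod p j (a ^ e)%N].
Proof.
move=> p_pr pNa n_gt0 ord_a; set q := p ^ (p == 2).+1.
have pn_gt1 : 1 < p ^ n by rewrite -(exp1n n) ltn_exp2r // prime_gt1.
have /andP [e_gt0 e_lt] := totient_pfactor_lt_maxn3 p_pr.
set b := a ^ totient q.
have b_1q : b = 1 %[mod q].
  by apply: Euler_exp_totient; rewrite coprime_sym coprime_pexpl // prime_coprime.
have bN1 : b != 1 %[mod p ^ n].
  apply: contraTN ord_a => /eqP /(unit_order_le pn_gt1 e_gt0) ord_le.
  by rewrite -ltnNge (leq_ltn_trans ord_le).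
have b_gt1 : 1 < b.
  have b_neq1 : b != 1 by apply: contraNneq bN1 => ->.
  have a_gt0 : 0 < a by rewrite lt0n; apply: contraNneq pNa => ->.
  by rewrite ltn_neqAle eq_sym b_neq1 expn_gt0 a_gt0.
have pk_b k : (p ^ k %| b - 1) = (k <= logn p (b - 1)).
  by rewrite pfactor_dvdn ?subn_gt0.
have q_b : (p == 2).+1 <= logn p (b - 1).
  by rewrite -pk_b -eqn_mod_dvd ?(ltnW b_gt1) //; apply/eqP.
exists (totient q), (logn p (b - 1)); split => //; last exact: exact_1mod_logn.
- rewrite (leq_trans _ q_b) // ltnNge; apply: contra bN1 => n_le_j.
  by rewrite eqn_mod_dvd ?(ltnW b_gt1) // pk_b.
- move: q_b; case: eqP => [_ -> | /eqP p_neq2 _]; first by rewrite orbT.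
  by rewrite ltn_neqAle eq_sym p_neq2 prime_gt1.
Qed.

Lemma padic_closure_mod p (S : nat -> Prop) y m : 0 < m -> padic_closure p S y ->
  exists2 s, S s & y = s %[mod p ^ m].
Proof.
move=> m_gt0 [y_gt0 [_ cl_y]].
by have [s [S_s [_ s_y]]] := cl_y y m y_gt0 m_gt0 (conj (leqnn y) erefl); exists s.
Qed.

Lemma padic_closure_powers p a e j y k : prime p -> 1 < a -> ~~ (p %| a) ->
  0 < e -> 0 < j -> (2 < p) || (1 < j) -> exact_1mod p j (a ^ e)%N ->
  0 < y -> y = a ^ k %[mod p ^ j] ->
  padic_closure p (fun s => exists2 K, 0 < K & s = a ^ K) y.
Proof.
move=> p_pr a_gt1 pNa e_gt0 j_gt0 p_j a_e y_gt0 y_ak.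
have pNak : ~~ (p %| a ^ k) by rewrite Euclid_dvdX // negb_and pNa.
split=> //; split.
  by rewrite /dvdn (modn_dvd_congr (dvdn_exp j_gt0 (dvdnn p)) y_ak).
move=> x M x_gt0 M_gt0 [x_le_y y_x].
have pNak' : ~~ (p%:Z %| (a ^ k)%N%:Z)%Z by rewrite dvdzE absz_nat.
have y_ak' : (p%:Z ^+ j %| (a ^ k)%N%:Z - y%:Z)%Z%R by rewrite -PoszX -eqn_modz y_ak.
have [i x_le_i] := exact_1mod_powers_cover p_pr M x j_gt0 p_j a_e pNak' y_ak'.
rewrite -!PoszX -PoszM -expnM -expnD -eqn_modz => /eqP ak_y.
have i_gt0 : 0 < i := leq_trans x_gt0 x_le_i.
exists (a ^ (k + e * i)); split.
  by exists (k + e * i); rewrite // addn_gt0 muln_gt0 e_gt0 i_gt0 orbT.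
split.
  apply: leq_trans (ltnW (ltn_expl _ a_gt1)).
  exact: leq_trans x_le_i (leq_trans (leq_pmull i e_gt0) (leq_addl k _)).
by rewrite (modn_dvd_congr (dvdn_exp2l p (leq_addl j M)) ak_y).
Qed.

Theorem lemma4p1 (p a n : nat) :
  prime p -> 0 < a -> ~~ (p %| a) -> 0 < n ->
  maxn p 3 <= unit_order (p ^ n) a ->
  forall y : nat,
    padic_closure p (fun s => exists2 k, 0 < k & s = a ^ k) y <->
    (0 < y /\ exists2 k, 0 < k & pi_mod (p ^ n) y = (pi_mod (p ^ n) a ^+ k)%R).
Proof.
move=> p_pr a_gt0 pNa n_gt0 ord_a y.
have pn_gt1 : 1 < p ^ n by rewrite -(exp1n n) ltn_exp2r // prime_gt1.
have a_gt1 : 1 < a.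
  rewrite ltn_neqAle a_gt0 andbT; apply: contraTneq ord_a => <-.
  have ord_1 := @unit_order_le _ 1 1 pn_gt1 erefl erefl.
  by rewrite -ltnNge (leq_ltn_trans ord_1) // leq_max orbT.
have [e [j [e_gt0 /andP [j_gt0 j_lt_n] p_j a_e]]] :=
  exists_exact_1mod_power p_pr pNa n_gt0 ord_a.
split=> [cl_y | [y_gt0 [k _ y_ak]]].
  have [_ [k k_gt0 ->] y_ak] := padic_closure_mod n_gt0 cl_y.
  split; first by case: cl_y.
  by exists k => //; apply/eqP; rewrite -pi_modX pi_mod_eqE // y_ak.
apply: (padic_closure_powers (k := k) p_pr a_gt1 pNa e_gt0 j_gt0 p_j a_e y_gt0).
apply: modn_dvd_congr (dvdn_exp2l p (ltnW j_lt_n)) _.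
by apply/eqP; rewrite -pi_mod_eqE // pi_modX y_ak.
Qed.
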